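(* Let $m \ge 2$ and $G=\mathbb{Z}^{m-1} \rtimes \mathbb{Z}/ 2\mathbb{Z}$, where $\mathbb{Z}/2\mathbb{Z}$ acts on $\mathbb{Z}^{m-1}$ by $v\mapsto -v$. In $\mathcal{M}_m$ there are exactly $2^m-1$ marked groups whose underlying group is isomorphic to $G$.
   Context: A marked group on $m$ generators is a pair $(H,S)$ with $S=(g_1,\dots,g_m)$ an ordered generating tuple of $H$; two marked groups $(H,S)$, $(H',S')$ are identified if there is an isomorphism $H\to H'$ mapping $g_i$ to $g_i'$ for all $i$. $\mathcal{M}_m$ denotes the set (space) of these equivalence classes. *)

From mathcomp Require Import all_boot all_order all_algebra.
Set Implicit Arguments. Unset Strict Implicit. Unset Printing Implicit Defensive.
Import GRing.Theory.
Local Open Scope ring_scope.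

Record group := Group {
  carrier :> Type;
  gmul : carrier -> carrier -> carrier;
  gone : carrier;
  ginv : carrier -> carrier;
  gmulA : associative gmul;
  gmul1 : left_id gone gmul;
  gmulV : left_inverse gone ginv gmul }.

Inductive generated (H : group) (P : H -> Prop) : H -> Prop :=
| gen_in x : P x -> generated P x
| gen_one : generated P (gone H)
| gen_mul x y : generated P x -> generated P y -> generated P (gmul x y)
| gen_inv x : generated P x -> generated P (ginv x).

Definition is_hom (H K : group) (f : H -> K) : Prop :=
  forall x y, f (gmul x y) = gmul (f x) (f y).

Definition isomorphic (H K : group) : Prop :=
  exists f : H -> K, is_hom f /\ bijective f.

Record marked_group (m : nat) := MarkedGroup {
  mgroup : group;
  mgens : 'I_m -> mgroup;
  mgens_generate : forall x : mgroup, generated (fun y => exists i, y = mgens i) x }.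

Definition marked_equiv (m : nat) (A B : marked_group m) : Prop :=
  exists f : mgroup A -> mgroup B,
    [/\ is_hom f, bijective f & forall i, f (mgens A i) = mgens B i].

(* Semidirect product V ⋊ Z/2Z, Z/2Z = bool acting on V by v |-> -v.
   (v,a)(w,b) = (v + a.w, a xor b). *)
Section SemiInv.
Variable V : zmodType.
Definition twist (a : bool) (w : V) : V := if a then - w else w.
Definition si_mul (x y : V * bool) : V * bool :=
  (x.1 + twist x.2 y.1, x.2 (+) y.2).
Definition si_one : V * bool := (0, false).
Definition si_inv (x : V * bool) : V * bool := (- twist x.2 x.1, x.2).

Lemma si_mulA : associative si_mul.
Proof.
case=> u [] [v [] [w []]]; rewrite /si_mul /twist /= ?opprD ?opprK ?addrA //.
Qed.
Lemma si_mul1 : left_id si_one si_mul.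
Proof. by case=> v a; rewrite /si_mul /= add0r. Qed.
Lemma si_mulV : left_inverse si_one si_inv si_mul.
Proof. by case=> v [] ; rewrite /si_mul /si_inv /si_one /twist /= ?opprK ?subrr ?addNr. Qed.

Definition semidirect_inv : group := Group si_mulA si_mul1 si_mulV.
End SemiInv.

Definition G_m (m : nat) : group := semidirect_inv 'rV[int]_(m - 1).

From mathcomp Require Import all_boot all_order all_algebra.
Set Implicit Arguments. Unset Strict Implicit. Unset Printing Implicit Defensive.
Import GRing.Theory Num.Theory.

(* The reflections of G = Z^n ⋊ Z/2Z are exactly its involutions, so every
   isomorphism of marked groups preserves which generators are reflections, and
   the set S of reflection generators is a nonempty subset of the m = n + 1
   indices.  Conversely, a marking with reflection set S is equivalent to a
   standard one: fixing a reflection generator (w, 1), the other generators give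
   the rows of a matrix A, and (v, a) |-> (v A + a w, a) is a homomorphism whose
   image contains the generators; surjectivity makes A invertible over Z.  So
   marked groups isomorphic to G correspond to the 2^m - 1 nonempty S. *)

Section GroupTheory.
Variable H : group.

Lemma gmulKr (a x : H) : gmul (ginv a) (gmul a x) = x.
Proof. by rewrite gmulA gmulV gmul1. Qed.

Lemma gmulrV (a : H) : gmul a (ginv a) = gone H.
Proof. by rewrite -[LHS](gmulKr (ginv a)) (gmulKr a) gmulV. Qed.

Lemma gmulr1 (a : H) : gmul a (gone H) = a.
Proof. by rewrite -(gmulV a) gmulA gmulrV gmul1. Qed.

Definition generates (k : nat) (g : 'I_k -> H) : Prop :=
  forall y, generated (fun z => exists i, z = g i) y.

End GroupTheory.

Section Homomorphisms.
Variables H K : group.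
Variable f : H -> K.
Hypothesis hom_f : is_hom f.

Lemma hom1 : f (gone H) = gone K.
Proof.
have idem : gmul (f (gone H)) (f (gone H)) = f (gone H) by rewrite -hom_f gmul1.
by rewrite -(gmulV (f (gone H))) -{3}idem gmulKr.
Qed.

Lemma homV x : f (ginv x) = ginv (f x).
Proof.
have inv_l : gmul (f (ginv x)) (f x) = gone K by rewrite -hom_f gmulV hom1.
by rewrite -[f (ginv x)]gmulr1 -(gmulrV (f x)) gmulA inv_l gmul1.
Qed.

Lemma hom_generated (P : H -> Prop) (Q : K -> Prop) :
  (forall x, P x -> Q (f x)) -> forall x, generated P x -> generated Q (f x).
Proof.
move=> PQ x; elim=> {x} [x Px || x y _ IHx _ IHy | x _ IHx].
- exact/gen_in/PQ.
- by rewrite hom1; apply: gen_one.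
- by rewrite hom_f; apply: gen_mul.
- by rewrite homV; apply: gen_inv.
Qed.

Lemma generated_sub_image (Q : K -> Prop) :
  (forall y, Q y -> exists x, y = f x) ->
  forall y, generated Q y -> exists x, y = f x.
Proof.
move=> QP y; elim=> {y} [y /QP // || _ _ _ [x ->] _ [x' ->] | _ _ [x ->]].
- by exists (gone H); rewrite hom1.
- by exists (gmul x x'); rewrite hom_f.
- by exists (ginv x); rewrite homV.
Qed.

Lemma hom_generates (k : nat) (g : 'I_k -> H) :
  bijective f -> generates g -> generates (f \o g).
Proof.
move=> [f' _ f'K] gen_g y; rewrite -(f'K y).
by apply: hom_generated (gen_g (f' y)) => _ [i ->]; exists i.
Qed.

Lemma can_hom (f' : K -> H) : cancel f f' -> cancel f' f -> is_hom f'.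
Proof. by move=> fK f'K x y; apply: (can_inj fK); rewrite hom_f !f'K. Qed.

Lemma comp_hom (L : group) (g : K -> L) : is_hom g -> is_hom (g \o f).
Proof. by move=> hom_g x y /=; rewrite hom_f hom_g. Qed.

End Homomorphisms.

Local Open Scope ring_scope.

Section Involutions.
Variable V : zmodType.
Hypothesis V_no2torsion : forall v : V, v *+ 2 = 0 -> v = 0.
Notation GV := (semidirect_inv V).

Lemma si_involutionP (x : GV) : x.2 <-> gmul x x = gone GV /\ x <> gone GV.
Proof.
case: x => v []; rewrite /= /si_mul /si_one /twist /=; split=> //.
- by split=> [|[]] //; rewrite subrr.
- by case=> -[]; rewrite -mulr2n => /V_no2torsion -> [].
Qed.

Lemma inj_hom_reflection (f : GV -> GV) x :
  is_hom f -> injective f -> (f x).2 = x.2.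
Proof.
move=> hom_f inj_f; apply/idP/idP => /si_involutionP [xx1 x_ne1];
  apply/si_involutionP; split.
- by apply: inj_f; rewrite hom_f xx1 hom1.
- by move=> x1; apply: x_ne1; rewrite x1 hom1.
- by rewrite -hom_f xx1 hom1.
- by move=> x1; apply: x_ne1; apply: inj_f; rewrite x1 hom1.
Qed.

End Involutions.

Lemma row_int_no2torsion n (v : 'rV[int]_n) : v *+ 2 = 0 -> v = 0.
Proof.
move/matrixP => v2; apply/matrixP=> i j; move: (v2 i j); rewrite !mxE -mulr2n.
by move/eqP; rewrite mulrn_eq0 => /eqP.
Qed.

Lemma int_scale_closed (U : lmodType int) (T : U -> Prop) : T 0 ->
  (forall x y, T x -> T y -> T (x + y)) -> (forall x, T x -> T (- x)) ->
  forall (c : int) x, T x -> T (c *: x).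
Proof.
move=> T0 TD TN c x Tx.
have Tmuln k : T (x *+ k) by elim: k => [|k IH]; rewrite ?mulr0n ?mulrS //; apply: TD.
case: c => k; first by rewrite -natz scaler_nat.
by rewrite NegzE scaleNr -natz scaler_nat; apply: TN.
Qed.

Section StandardMarkings.
Variable n : nat.
Notation V := 'rV[int]_n.
Notation GG := (semidirect_inv V).

Lemma si_mulE (x y : GG) : gmul x y = (x.1 + twist x.2 y.1, x.2 (+) y.2).
Proof. by []. Qed.

Definition pivot (S : {set 'I_n.+1}) : 'I_n.+1 := odflt ord0 [pick i in S].

Lemma pivot_in S : S != set0 -> pivot S \in S.
Proof.
case/set0Pn=> i iS; rewrite /pivot; case: pickP => [// | noS].
by move: (noS i); rewrite /= iS.
Qed.

(* The pivot of S is the reflection (0, 1); the other indices, in order, carry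
   the basis vectors, made into reflections exactly when they lie in S. *)
Definition std_gen (S : {set 'I_n.+1}) (i : 'I_n.+1) : GG :=
  if unlift (pivot S) i is Some k then ('e_k, i \in S) else (0, true).

Lemma std_gen_pivot S : std_gen S (pivot S) = (0, true).
Proof. by rewrite /std_gen unlift_none. Qed.

Lemma std_gen_lift S k :
  std_gen S (lift (pivot S) k) = ('e_k, lift (pivot S) k \in S).
Proof. by rewrite /std_gen liftK. Qed.

Lemma std_gen_reflection S i : S != set0 -> (std_gen S i).2 = (i \in S).
Proof.
by move=> S_neq0; case: (unliftP (pivot S) i) => [k ->|->];
  rewrite ?std_gen_lift ?std_gen_pivot ?pivot_in.
Qed.

Lemma std_gen_generates S : generates (std_gen S).
Proof.
rewrite /generates; set P := (fun _ => _).
have P_pivot : P (0, true) by exists (pivot S); rewrite std_gen_pivot.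
have gen_e (k : 'I_n) : generated P ('e_k, false).
  have := std_gen_lift S k; set i := lift (pivot S) k.
  case: (boolP (i \in S)) => iS ei.
  - have -> : ('e_k, false) = gmul (std_gen S i) (0, true).
      by rewrite ei si_mulE /= /twist oppr0 addr0.
    by apply: gen_mul (gen_in _) (gen_in P_pivot); exists i.
  - by apply: gen_in; exists i; rewrite ei.
pose T x := generated P (x, false).
have T_all x : T x.
  have T0 : T 0 by exact: gen_one.
  have TD y z : T y -> T z -> T (y + z) by exact: gen_mul.
  have TN y : T y -> T (- y) by exact: gen_inv.
  rewrite (row_sum_delta x); apply: (big_ind T) => // k _.
  exact: int_scale_closed.
case=> x []; last exact: T_all.
have -> : ((x, true) : GG) = gmul ((x, false) : GG) (0, true).
  by rewrite si_mulE /= /twist addr0.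
exact: gen_mul (T_all x) (gen_in P_pivot).
Qed.

Definition reflections (g : 'I_n.+1 -> GG) : {set 'I_n.+1} := [set i | (g i).2].

Lemma reflections_neq0 g : generates g -> reflections g != set0.
Proof.
move=> gen_g; apply/negP => /eqP refl0.
have translations_closed y : generated (fun z => exists i, z = g i) y -> y.2 = false.
  elim=> {y} [_ [i ->] | // | x y _ x2 _ y2 | x _ x2].
  - by apply/negbTE; apply/negP => gi; have := in_set0 i; rewrite -refl0 inE gi.
  - by rewrite si_mulE /= x2 y2.
  - exact: x2.
by have := translations_closed _ (gen_g (0, true)).
Qed.

Definition sel (a : bool) (w : V) : V := if a then w else 0.

Definition affine_map (A : 'M[int]_n) (w : V) (x : GG) : GG :=
  (x.1 *m A + sel x.2 w, x.2).

Lemma affine_hom A w : is_hom (affine_map A w).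
Proof.
case=> v [] [x []]; rewrite /affine_map !si_mulE /= /twist /sel;
  congr pair; rewrite ?mulmxDl ?mulNmx ?addr0 ?subr0 //.
- by rewrite opprD addrACA subrr addr0.
- by rewrite addrAC.
- by rewrite addrA.
Qed.

Lemma affine_bij A w : A \in unitmx -> bijective (affine_map A w).
Proof.
move=> A_unit; exists (fun y : GG => ((y.1 - sel y.2 w) *m invmx A, y.2)).
- by case=> v a; rewrite /affine_map /= addrK mulmxK.
- by case=> v a; rewrite /affine_map /= mulmxKV // subrK.
Qed.

Lemma affine_surj_unit A w :
  (forall y, exists x, y = affine_map A w x) -> A \in unitmx.
Proof.
move=> surj; have e_in_rowspace k : exists c : V, 'e_k = c *m A.
  have [[c b] [ek_eq b_false]] := surj ('e_k, false).
  by exists c; rewrite ek_eq /= -b_false addr0.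
have [f fA] := fin_all_exists e_in_rowspace.
have BA : (\matrix_k f k) *m A = 1%:M.
  by apply/row_matrixP => k; rewrite row_mul rowK row1 -fA.
by case: (mulmx1_unit BA).
Qed.

Lemma std_gen_universal g : generates g ->
  exists phi : GG -> GG, [/\ is_hom phi, bijective phi &
    forall i, phi (std_gen (reflections g) i) = g i].
Proof.
move=> gen_g; set S := reflections g.
have g_pivot : (g (pivot S)).2.
  by have := pivot_in (reflections_neq0 gen_g); rewrite inE.
set w := (g (pivot S)).1.
pose A := \matrix_k ((g (lift (pivot S) k)).1 - sel (g (lift (pivot S) k)).2 w).
have A_std i : affine_map A w (std_gen S i) = g i.
  case: (unliftP (pivot S) i) => [k|] ->; rewrite /affine_map.
  - by rewrite std_gen_lift /= -rowE rowK inE subrK -surjective_pairing.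
  - by rewrite std_gen_pivot /= mul0mx add0r [RHS]surjective_pairing g_pivot.
have A_surj y : exists x, y = affine_map A w x.
  apply: (generated_sub_image (affine_hom A w)) (gen_g y) => _ [i ->].
  by exists (std_gen S i); rewrite A_std.
exists (affine_map A w); split=> //; first exact: affine_hom.
exact/affine_bij/(affine_surj_unit A_surj).
Qed.

End StandardMarkings.

Local Close Scope ring_scope.

Definition std_marking n (S : {set 'I_n.+1}) : marked_group n.+1 :=
  MarkedGroup (std_gen_generates S).

Lemma std_marking_inj n (S T : {set 'I_n.+1}) : S != set0 -> T != set0 ->
  marked_equiv (std_marking S) (std_marking T) -> S = T.
Proof.
move=> S_neq0 T_neq0 [f [hom_f /bij_inj inj_f f_gen]]; apply/setP => i.
rewrite -(std_gen_reflection i S_neq0) -(std_gen_reflection i T_neq0).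
by rewrite -(inj_hom_reflection (@row_int_no2torsion n) _ hom_f inj_f) f_gen.
Qed.

Lemma marked_equiv_std_marking n (M : marked_group n.+1) :
  isomorphic (mgroup M) (semidirect_inv 'rV[int]_n) ->
  exists2 S, S != set0 & marked_equiv M (std_marking S).
Proof.
case=> h [hom_h bij_h].
have gen_g := hom_generates hom_h bij_h (@mgens_generate _ M).
have [phi [hom_phi [psi phiK psiK] phi_std]] := std_gen_universal gen_g.
exists (reflections (h \o mgens M)); first exact: reflections_neq0.
exists (psi \o h); split.
- exact/(comp_hom hom_h)/(can_hom hom_phi phiK psiK).
- by apply: bij_comp => //; exists phi.
- by move=> i /=; rewrite -[h _]phi_std phiK.
Qed.

Lemma marked_groups_of_semidirect_inv n :
  exists reps : 'I_(2 ^ n.+1 - 1) -> marked_group n.+1,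
    [/\ (forall k, isomorphic (mgroup (reps k)) (semidirect_inv 'rV[int]_n)),
        (forall k l, marked_equiv (reps k) (reps l) -> k = l)
      & (forall M : marked_group n.+1,
           isomorphic (mgroup M) (semidirect_inv 'rV[int]_n) ->
           exists k, marked_equiv M (reps k))].
Proof.
pose nonempty := predC1 (set0 : {set 'I_n.+1}).
have card_nonempty : 2 ^ n.+1 - 1 = #|nonempty|.
  by rewrite cardC1 -cardsT -powersetT card_powerset cardsT card_ord subn1.
have enum_neq0 (j : 'I_#|nonempty|) : enum_val j != set0.
  by have := enum_valP j; rewrite inE.
exists (fun k => std_marking (enum_val (cast_ord card_nonempty k))); split.
- by move=> k; exists id; split=> //; exists id.
- move=> k l /(std_marking_inj (enum_neq0 _) (enum_neq0 _)) equiv_kl.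
  exact/(cast_ord_inj (eq_n := card_nonempty))/enum_val_inj.
- move=> M /marked_equiv_std_marking [S S_neq0 equiv_MS].
  have S_nonempty : S \in nonempty by rewrite inE.
  exists (cast_ord (esym card_nonempty) (enum_rank_in S_nonempty S)).
  by rewrite cast_ordKV enum_rankK_in.
Qed.

Theorem proposition5p4 (m : nat) (hm : 2 <= m) :
  exists reps : 'I_(2 ^ m - 1) -> marked_group m,
    [/\ (forall k, isomorphic (mgroup (reps k)) (G_m m)),
        (forall k l, marked_equiv (reps k) (reps l) -> k = l)
      & (forall M : marked_group m, isomorphic (mgroup M) (G_m m) ->
           exists k, marked_equiv M (reps k))].
Proof.
case: m hm => // n _.
rewrite /G_m [n.+1 - 1]subn1 /=.
exact: marked_groups_of_semidirect_inv.
Qed.
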